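(* Let $J\subset\mathbb{R}\setminus\{0\}$ be compact. Then there is a constant $C>0$ such that \[ \Big|\int_y^1e^{-i\varphi(x,\alpha)}dx\Big|\le C(1-y)^3 \] for all $y\in[0,1)$ and all $\alpha\in J$.
   Context: For $\alpha\in\mathbb{R}\setminus\{0\}$ and $y\in(-1,1)$, $\varphi(y,\alpha):=-\frac{2\alpha}{(1-y)^2}+\frac{2\alpha}{1-y}-\frac{2}{\alpha}\log(1-y)$. *)

From Stdlib Require Import Reals.
From Coquelicot Require Import Coquelicot.
Open Scope R_scope.

Definition phi (y alpha : R) : R :=
  - (2 * alpha) / (1 - y) ^ 2 + (2 * alpha) / (1 - y) - (2 / alpha) * ln (1 - y).

Definition expi (t : R) : C := (cos t, sin t).

From Stdlib Require Import Reals Rtopology Lra Psatz Classical.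
From Coquelicot Require Import Coquelicot.
Open Scope R_scope.

(* Non-stationary phase at the singular endpoint.  With s = 1 - x one has
   phi' = 2 N / (alpha s^3), N = -2 alpha^2 + alpha^2 s + s^2, and N <= -alpha^2/2
   once s <= m/2, where m > 0 bounds |alpha| below on the compact set J.  So
   u = 1/phi' = O(s^3) and u' = O(s^2) there, and integrating by parts with
   e^{-i phi} = i u (e^{-i phi})' (on real and imaginary parts separately) bounds
   the integral over [y, c] by O((1-y)^3).  The piece [c, 1] with 1 - c = (1-y)^3
   is bounded trivially, as is the whole integral when 1 - y > m/2. *)

Lemma Rabs_div_le (x y z : R) : y <> 0 -> Rabs x <= z * Rabs y -> Rabs (x / y) <= z.
Proof.
intros Hy H. unfold Rdiv. rewrite Rabs_mult, Rabs_inv.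
assert (0 < Rabs y) by (apply Rabs_pos_lt; exact Hy).
apply (Rmult_le_reg_r (Rabs y)); [lra|]. rewrite Rmult_assoc, Rinv_l; lra.
Qed.

Lemma compact_abs_lower_bound (J : R -> Prop) :
  compact J -> (forall a, J a -> a <> 0) -> exists m, 0 < m /\ forall a, J a -> m <= Rabs a.
Proof.
intros HJc HJ0. destruct (compact_P2 J HJc 0) as [d Hd].
{ intros HJ. exact (HJ0 0 HJ eq_refl). }
exists d. split; [apply cond_pos|].
intros a Ha. destruct (Rle_or_lt d (Rabs a)) as [Hle|Hlt]; [exact Hle|].
exfalso. apply (Hd a); [unfold disc; rewrite Rminus_0_r; exact Hlt | exact Ha].
Qed.

Lemma Rabs_mult_le_of_le_1 (u t B : R) : Rabs u <= B -> Rabs t <= 1 -> Rabs (u * t) <= B.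
Proof. intros Hu Ht. rewrite Rabs_mult. pose proof (Rabs_pos u). pose proof (Rabs_pos t). nra. Qed.

Lemma is_RInt_by_parts_bound (g h k : R -> R) (y c M : R) :
  y <= c ->
  (forall x, y <= x <= c -> is_derive g x (h x + k x)) ->
  (forall x, y <= x <= c -> continuous h x) ->
  (forall x, y <= x <= c -> continuous k x) ->
  (forall x, y <= x <= c -> Rabs (k x) <= M) ->
  exists L, is_RInt h y c L /\ Rabs L <= Rabs (g c) + Rabs (g y) + (c - y) * M.
Proof.
intros Hyc Hg Hh Hk HM.
assert (Hhk : is_RInt (fun x => h x + k x) y c (g c - g y)).
{ apply (is_RInt_derive g); rewrite Rmin_left, Rmax_right by exact Hyc.
  - exact Hg.
  - intros x Hx. apply (continuous_plus h k); [apply Hh | apply Hk]; exact Hx. }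
destruct (ex_RInt_continuous (V := R_CompleteNormedModule) k y c) as [Lk HLk].
{ rewrite Rmin_left, Rmax_right by exact Hyc. exact Hk. }
assert (HLkM : Rabs Lk <= (c - y) * M) by exact (norm_RInt_le_const k y c Lk M Hyc HM HLk).
exists (g c - g y - Lk). split.
- apply (is_RInt_ext (fun x => h x + k x - k x)); [intros x _; lra|].
  exact (is_RInt_minus (V := R_NormedModule) _ _ y c _ _ Hhk HLk).
- pose proof (Rabs_triang (g c - g y) (- Lk)). pose proof (Rabs_triang (g c) (- g y)).
  rewrite Rabs_Ropp in *. unfold Rminus in *. lra.
Qed.

Lemma le_div_sqr_mul_cube (m s : R) : 0 < m -> m / 2 < s -> s <= 4 / m ^ 2 * s ^ 3.
Proof.
intros Hm Hs. assert (Hms : m ^ 2 <= 4 * s ^ 2) by nra.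
apply Rle_trans with (s * (m ^ 2 * / m ^ 2)).
- rewrite Rinv_r by (apply pow_nonzero; lra). lra.
- replace (4 / m ^ 2 * s ^ 3) with (s * (4 * s ^ 2 * / m ^ 2)) by (unfold Rdiv; ring).
  apply Rmult_le_compat_l; [lra|]. apply Rmult_le_compat_r; [|exact Hms].
  apply Rlt_le, Rinv_0_lt_compat, pow_lt, Hm.
Qed.

Lemma Cmod_le_abs_fst_snd (z : C) : Cmod z <= Rabs (fst z) + Rabs (snd z).
Proof.
destruct z as [u v]; unfold Cmod; simpl.
pose proof (Rabs_pos u); pose proof (Rabs_pos v).
rewrite <- (sqrt_Rsqr (Rabs u + Rabs v)) by lra.
apply sqrt_le_1_alt. pose proof (Rsqr_abs u); pose proof (Rsqr_abs v). unfold Rsqr in *. nra.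
Qed.

Lemma Cmod_expi (t : R) : Cmod (expi t) = 1.
Proof.
unfold Cmod, expi; simpl. transitivity (sqrt 1); [f_equal | apply sqrt_1].
pose proof (sin2_cos2 t) as H. unfold Rsqr in H. lra.
Qed.

Lemma Cmod_RInt_expi_le (g : R -> R) (a b : R) : a <= b ->
  ex_RInt (V := C_R_CompleteNormedModule) (fun x => expi (g x)) a b ->
  Cmod (RInt (V := C_R_CompleteNormedModule) (fun x => expi (g x)) a b) <= b - a.
Proof.
intros Hab [l Hl]. rewrite (is_RInt_unique _ _ _ _ Hl), Cmod_norm.
replace (b - a) with ((b - a) * 1) by ring.
apply (norm_RInt_le_const (V := C_R_NormedModule) (fun x => expi (g x)) a b l 1 Hab); [|exact Hl].
intros x _. rewrite <- (Cmod_expi (g x)), Cmod_norm. apply Rle_refl.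
Qed.

Lemma Lub_Rbar_True : Lub_Rbar (fun _ : R => True) = p_infty.
Proof.
apply is_lub_Rbar_unique. split.
- intros x _. exact I.
- intros [r| |] Hl; simpl; auto.
  + specialize (Hl (r + 1) I). simpl in Hl. lra.
  + exact (Hl 0 I).
Qed.

(* Without integrability the defining predicate of [iota] holds of every set,
   so [RInt] evaluates to [real p_infty = 0] componentwise. *)
Lemma RInt_C_not_ex (f : R -> C) (a b : R) :
  ~ ex_RInt (V := C_R_CompleteNormedModule) f a b ->
  RInt (V := C_R_CompleteNormedModule) f a b = (0, 0).
Proof.
intros Hf.
change (C_complete_lim (fun P : C -> Prop => forall l, is_RInt f a b l -> P l) = (0, 0)).
unfold C_complete_lim, R_complete_lim.
f_equal; (erewrite Lub_Rbar_eqset;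
  [ rewrite Lub_Rbar_True; reflexivity
  | intros x; split; [intros _; exact I | intros _ l Hl; exfalso; apply Hf; exists l; exact Hl] ]).
Qed.

Definition dphi (a x : R) : R :=
  -4 * a / (1 - x) ^ 3 + 2 * a / (1 - x) ^ 2 + 2 / (a * (1 - x)).

(* [dphi a x = 2 * dphi_numer a (1 - x) / (a * (1 - x) ^ 3)]. *)
Definition dphi_numer (a s : R) : R := -2 * a ^ 2 + a ^ 2 * s + s ^ 2.

Definition inv_dphi (a x : R) : R := a * (1 - x) ^ 3 / (2 * dphi_numer a (1 - x)).

Definition dinv_dphi (a x : R) : R :=
  - a * (1 - x) ^ 2 * (3 * dphi_numer a (1 - x) - (1 - x) * (a ^ 2 + 2 * (1 - x)))
  / (2 * dphi_numer a (1 - x) ^ 2).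

Lemma is_derive_phi (a x : R) : a <> 0 -> x < 1 -> is_derive (fun x => phi x a) x (dphi a x).
Proof.
intros Ha Hx. unfold phi, dphi. auto_derive.
- repeat split; try lra; intros H; nra.
- field. split; [lra | exact Ha].
Qed.

Lemma inv_dphi_mul_dphi (a x : R) : a <> 0 -> x < 1 -> dphi_numer a (1 - x) <> 0 ->
  inv_dphi a x * dphi a x = 1.
Proof.
intros Ha Hx HN. unfold inv_dphi, dphi. unfold dphi_numer in *.
field. repeat split; try exact Ha; try exact HN; lra.
Qed.

Lemma is_derive_inv_dphi (a x : R) : dphi_numer a (1 - x) <> 0 ->
  is_derive (inv_dphi a) x (dinv_dphi a x).
Proof.
intros HN. unfold inv_dphi, dinv_dphi. unfold dphi_numer in *. auto_derive.
- intros H. apply HN. lra.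
- field. exact HN.
Qed.

Lemma continuous_dinv_dphi (a x : R) : dphi_numer a (1 - x) <> 0 -> continuous (dinv_dphi a) x.
Proof.
intros HN. apply (ex_derive_continuous (V := R_NormedModule)).
unfold dinv_dphi. unfold dphi_numer in *. auto_derive. intros H. apply HN. nra.
Qed.

Lemma is_derive_inv_dphi_mul_comp_phi (T T' : R -> R) (a x : R) :
  (forall t, is_derive T t (T' t)) -> a <> 0 -> x < 1 -> dphi_numer a (1 - x) <> 0 ->
  is_derive (fun x => inv_dphi a x * T (phi x a)) x
    (T' (phi x a) + dinv_dphi a x * T (phi x a)).
Proof.
intros HT Ha Hx HN.
replace (T' (phi x a) + dinv_dphi a x * T (phi x a))
  with (dinv_dphi a x * T (phi x a) + inv_dphi a x * (dphi a x * T' (phi x a))).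
- apply (is_derive_mult (inv_dphi a) (fun x => T (phi x a))).
  + exact (is_derive_inv_dphi a x HN).
  + apply (is_derive_comp T (fun x => phi x a)); [apply HT | exact (is_derive_phi a x Ha Hx)].
  + intros; apply Rmult_comm.
- rewrite <- Rmult_assoc, inv_dphi_mul_dphi by assumption. ring.
Qed.

Section NearOne.

Variables a m : R.
Hypothesis m_gt0 : 0 < m.
Hypothesis m_le_abs_a : m <= Rabs a.

Lemma dphi_numer_bounds (s : R) : 0 < s <= 1 -> s <= m / 2 ->
  -2 * a ^ 2 <= dphi_numer a s <= - a ^ 2 / 2.
Proof. intros Hs Hsm. unfold dphi_numer. rewrite <- (pow2_abs a). split; nra. Qed.

Lemma dphi_numer_neq0 (s : R) : 0 < s <= 1 -> s <= m / 2 -> dphi_numer a s <> 0.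
Proof.
intros Hs Hsm H. pose proof (dphi_numer_bounds s Hs Hsm). rewrite <- (pow2_abs a) in *. nra.
Qed.

Lemma Rabs_inv_dphi_le (x : R) : 0 < 1 - x <= 1 -> 1 - x <= m / 2 ->
  Rabs (inv_dphi a x) <= (1 - x) ^ 3 / m.
Proof.
intros Hs Hsm. destruct (dphi_numer_bounds _ Hs Hsm) as [_ HN].
unfold inv_dphi. set (s := 1 - x) in *. set (N := dphi_numer a s) in *.
rewrite <- (pow2_abs a) in HN. set (A := Rabs a) in *.
assert (HN0 : N < 0) by nra.
apply Rabs_div_le; [intros H; lra|].
rewrite Rabs_mult, (Rabs_right (s ^ 3)), (Rabs_left (2 * N)) by nra. fold A.
replace (s ^ 3 / m * - (2 * N)) with (s ^ 3 / m * (- 2 * N)) by ring.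
apply Rle_trans with (s ^ 3 / m * (m * A)).
- apply Req_le. field. lra.
- apply Rmult_le_compat_l; [apply Rle_mult_inv_pos; [apply pow_le|]|]; nra.
Qed.

Lemma Rabs_dinv_dphi_le (x : R) : 0 < 1 - x <= 1 -> 1 - x <= m / 2 ->
  Rabs (dinv_dphi a x) <= (14 / m + 4 / m ^ 3) * (1 - x) ^ 2.
Proof.
intros Hs Hsm. destruct (dphi_numer_bounds _ Hs Hsm) as [HN1 HN2].
unfold dinv_dphi. set (s := 1 - x) in *. set (N := dphi_numer a s) in *.
rewrite <- (pow2_abs a) in *. set (A := Rabs a) in *.
set (q := / m). assert (Hq : m * q = 1) by (unfold q; field; lra).
replace (14 / m + 4 / m ^ 3) with (14 * q + 4 * q ^ 3) by (unfold q; field; lra).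
assert (HqA : 1 <= q * A) by nra.
assert (HX : Rabs (3 * N - s * (A ^ 2 + 2 * s)) <= 7 * A ^ 2 + 2) by (apply Rabs_le; nra).
assert (HN4 : A ^ 4 <= 4 * N ^ 2) by nra.
assert (Hcoef : A * (7 * A ^ 2 + 2) <= (14 * q + 4 * q ^ 3) * A ^ 4 / 2).
{ assert (1 <= (q * A) ^ 3) by (apply pow_R1_Rle; exact HqA). nra. }
assert (HN0 : N < 0) by nra.
apply Rabs_div_le; [intros H; nra|].
rewrite (Rabs_right (2 * N ^ 2)) by nra.
rewrite !Rabs_mult, Rabs_Ropp, (Rabs_right (s ^ 2)) by nra. fold A.
assert (HK : 0 <= (14 * q + 4 * q ^ 3) * s ^ 2).
{ assert (0 < q) by (unfold q; apply Rinv_0_lt_compat; lra).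
  assert (0 < q ^ 3) by (apply pow_lt; lra). nra. }
apply Rle_trans with (s ^ 2 * (A * (7 * A ^ 2 + 2))).
{ assert (0 <= A * s ^ 2) by (apply Rmult_le_pos; [lra | apply pow2_ge_0]). nra. }
apply Rle_trans with (s ^ 2 * ((14 * q + 4 * q ^ 3) * A ^ 4 / 2)).
{ apply Rmult_le_compat_l; [apply pow2_ge_0 | exact Hcoef]. }
nra.
Qed.

Let a_neq0 : a <> 0.
Proof. intros ->. rewrite Rabs_R0 in m_le_abs_a. lra. Qed.

Lemma is_RInt_oscillatory_bound (T T' : R -> R) (y c : R) :
  (forall t, is_derive T t (T' t)) -> (forall t, continuous T' t) ->
  (forall t, Rabs (T t) <= 1) ->
  0 <= y -> y <= c < 1 -> 1 - y <= m / 2 ->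
  exists L : R, is_RInt (fun x => T' (phi x a)) y c L /\
    Rabs L <= (16 / m + 4 / m ^ 3) * (1 - y) ^ 3.
Proof.
intros HT HT' HT1 Hy Hyc Hym.
assert (HK : 0 <= 14 / m + 4 / m ^ 3).
{ assert (0 < m ^ 3) by (apply pow_lt; lra).
  apply Rplus_le_le_0_compat; apply Rlt_le, Rdiv_lt_0_compat; lra. }
assert (Hreg : forall x, y <= x <= c -> 0 < 1 - x <= 1 /\ 1 - x <= m / 2) by (intros; lra).
assert (Hphi : forall x, y <= x <= c -> continuous (fun x => phi x a) x).
{ intros x Hx. apply (ex_derive_continuous (V := R_NormedModule)).
  eexists. apply is_derive_phi; [exact a_neq0 | lra]. }
destruct (is_RInt_by_parts_bound (fun x => inv_dphi a x * T (phi x a))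
  (fun x => T' (phi x a)) (fun x => dinv_dphi a x * T (phi x a))
  y c ((14 / m + 4 / m ^ 3) * (1 - y) ^ 2)) as [L [HL HLb]].
- lra.
- intros x Hx. destruct (Hreg x Hx) as [Hs Hsm].
  apply is_derive_inv_dphi_mul_comp_phi;
    [exact HT | exact a_neq0 | lra | exact (dphi_numer_neq0 _ Hs Hsm)].
- intros x Hx. apply (continuous_comp (fun x => phi x a) T'); [exact (Hphi x Hx) | apply HT'].
- intros x Hx. destruct (Hreg x Hx) as [Hs Hsm].
  apply (continuous_mult (dinv_dphi a) (fun x => T (phi x a))).
  + exact (continuous_dinv_dphi a x (dphi_numer_neq0 _ Hs Hsm)).
  + apply (continuous_comp (fun x => phi x a) T); [exact (Hphi x Hx)|].
    apply (ex_derive_continuous (V := R_NormedModule)). eexists. apply HT.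
- intros x Hx. destruct (Hreg x Hx) as [Hs Hsm]. apply Rabs_mult_le_of_le_1; [|apply HT1].
  apply (Rle_trans _ _ _ (Rabs_dinv_dphi_le x Hs Hsm)).
  apply Rmult_le_compat_l.
  + exact HK.
  + apply pow_incr. lra.
- exists L. split; [exact HL|].
  assert (Hg : forall x, y <= x <= c -> Rabs (inv_dphi a x * T (phi x a)) <= (1 - y) ^ 3 / m).
  { intros x Hx. destruct (Hreg x Hx) as [Hs Hsm].
    apply Rabs_mult_le_of_le_1; [|apply HT1].
    apply (Rle_trans _ _ _ (Rabs_inv_dphi_le x Hs Hsm)).
    apply Rmult_le_compat_r; [apply Rlt_le, Rinv_0_lt_compat; lra | apply pow_incr; lra]. }
  pose proof (Hg c ltac:(lra)). pose proof (Hg y ltac:(lra)).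
  assert ((c - y) * ((14 / m + 4 / m ^ 3) * (1 - y) ^ 2) <= (14 / m + 4 / m ^ 3) * (1 - y) ^ 3).
  { replace ((14 / m + 4 / m ^ 3) * (1 - y) ^ 3)
      with ((1 - y) * ((14 / m + 4 / m ^ 3) * (1 - y) ^ 2)) by ring.
    apply Rmult_le_compat_r; [apply Rmult_le_pos; [exact HK | apply pow2_ge_0] | lra]. }
  replace ((16 / m + 4 / m ^ 3) * (1 - y) ^ 3)
    with ((1 - y) ^ 3 / m + (1 - y) ^ 3 / m + (14 / m + 4 / m ^ 3) * (1 - y) ^ 3) by (field; lra).
  lra.
Qed.

Lemma Cmod_RInt_expi_phi_near_one (y : R) : 0 <= y < 1 -> 1 - y <= m / 2 ->
  ex_RInt (V := C_R_CompleteNormedModule) (fun x => expi (- phi x a)) y 1 ->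
  Cmod (RInt (V := C_R_CompleteNormedModule) (fun x => expi (- phi x a)) y 1)
    <= (32 / m + 8 / m ^ 3 + 1) * (1 - y) ^ 3.
Proof.
intros Hy Hym Hex. set (f := fun x => expi (- phi x a)).
(* Cutting at [c] with [1 - c = (1 - y) ^ 3] makes the trivially bounded tail small enough. *)
set (c := 1 - (1 - y) ^ 3).
assert (Hcube : 0 < (1 - y) ^ 3 <= 1 - y).
{ split; [apply pow_lt; lra|].
  assert ((1 - y) ^ 2 <= 1) by (rewrite <- (pow1 2); apply pow_incr; lra). simpl. nra. }
assert (Hc : y <= c < 1) by (unfold c; lra).
assert (Hex_yc : ex_RInt (V := C_R_CompleteNormedModule) f y c)
  by (apply (ex_RInt_Chasles_1 _ y c 1); [lra | exact Hex]).
assert (Hex_c1 : ex_RInt (V := C_R_CompleteNormedModule) f c 1)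
  by (apply (ex_RInt_Chasles_2 _ y c 1); [lra | exact Hex]).
rewrite <- (RInt_Chasles _ y c 1 Hex_yc Hex_c1).
destruct (is_RInt_oscillatory_bound sin (fun t => cos (- t)) y c) as [L1 [HL1 HL1b]];
  try lra.
{ intros t. rewrite cos_neg. apply is_derive_sin. }
{ intros t. apply (ex_derive_continuous (V := R_NormedModule)). auto_derive. exact I. }
{ intros t. apply Rabs_le, SIN_bound. }
destruct (is_RInt_oscillatory_bound cos (fun t => sin (- t)) y c) as [L2 [HL2 HL2b]];
  try lra.
{ intros t. rewrite sin_neg. apply is_derive_cos. }
{ intros t. apply (ex_derive_continuous (V := R_NormedModule)). auto_derive. exact I. }
{ intros t. apply Rabs_le, COS_bound. }
assert (Hhead : is_RInt (V := C_R_NormedModule) f y c (L1, L2))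
  by exact (is_RInt_fct_extend_pair f y c L1 L2 HL1 HL2).
rewrite (is_RInt_unique (V := C_R_CompleteNormedModule) _ _ _ _ Hhead).
assert (Htail : Cmod (RInt (V := C_R_CompleteNormedModule) f c 1) <= 1 - c)
  by exact (Cmod_RInt_expi_le (fun x => - phi x a) c 1 ltac:(lra) Hex_c1).
apply Rle_trans with (Cmod (L1, L2) + Cmod (RInt (V := C_R_CompleteNormedModule) f c 1));
  [apply Cmod_triangle|].
pose proof (Cmod_le_abs_fst_snd (L1, L2)) as Hhead_le; simpl in Hhead_le.
replace ((32 / m + 8 / m ^ 3 + 1) * (1 - y) ^ 3)
  with (2 * ((16 / m + 4 / m ^ 3) * (1 - y) ^ 3) + (1 - c)) by (unfold c; field; lra).
lra.
Qed.

End NearOne.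

Theorem lemma3p33 (J : R -> Prop) (HJc : compact J) (HJ0 : forall a, J a -> a <> 0) :
  exists C : R, 0 < C /\
    forall y alpha, 0 <= y < 1 -> J alpha ->
      Cmod (RInt (V := C_R_CompleteNormedModule)
              (fun x => expi (- phi x alpha)) y 1) <= C * (1 - y) ^ 3.
Proof.
destruct (compact_abs_lower_bound J HJc HJ0) as [m [Hm HmJ]].
assert (Hm1 : 0 < / m) by (apply Rinv_0_lt_compat; exact Hm).
assert (Hm2 : 0 < / m ^ 2) by (apply Rinv_0_lt_compat, pow_lt; exact Hm).
assert (Hm3 : 0 < / m ^ 3) by (apply Rinv_0_lt_compat, pow_lt; exact Hm).
exists (32 / m + 8 / m ^ 3 + 1 + 4 / m ^ 2). split; [unfold Rdiv; lra|].
intros y a Hy Ha.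
assert (Hs3 : 0 < (1 - y) ^ 3) by (apply pow_lt; lra).
destruct (classic (ex_RInt (V := C_R_CompleteNormedModule) (fun x => expi (- phi x a)) y 1))
  as [Hex|Hnex].
- destruct (Rle_or_lt (1 - y) (m / 2)) as [Hnear|Hfar].
  + pose proof (Cmod_RInt_expi_phi_near_one a m Hm (HmJ a Ha) y Hy Hnear Hex).
    assert (0 <= 4 / m ^ 2 * (1 - y) ^ 3) by (unfold Rdiv; nra).
    lra.
  + pose proof (Cmod_RInt_expi_le (fun x => - phi x a) y 1 ltac:(lra) Hex) as Hle.
    pose proof (le_div_sqr_mul_cube m (1 - y) Hm Hfar).
    assert (0 <= (32 / m + 8 / m ^ 3 + 1) * (1 - y) ^ 3) by (unfold Rdiv; nra).
    lra.
- rewrite (RInt_C_not_ex _ _ _ Hnex). change (0, 0) with (RtoC 0). rewrite Cmod_0.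
  apply Rmult_le_pos; [unfold Rdiv; lra | lra].
Qed.
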